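(* The jump operator $\Gamma_{\mathscr{TP}}$ is monotone: for all pairs of pairs $(T,P)$, $(T',P')$ of subsets of $\omega$, if $(T,P)\le(T',P')$ then $\Gamma_{\mathscr{TP}}(T,P)\le\Gamma_{\mathscr{TP}}(T',P')$.
   Context: Language. Let $\mathcal L_{\mathbb N}$ be the language of first-order Peano arithmetic and $\mathcal L=\mathcal L_{\mathbb N}\cup\{\mathrm T,\mathrm P\}$ with unary predicates $\mathrm T,\mathrm P$. $\mathcal L$-formulas are in Tait style: literals are $s=t$, $s\neq t$, $\mathrm Tt$, $\neg\mathrm Tt$, $\mathrm Pt$, $\neg\mathrm Pt$; formulas are built from literals by $\wedge,\vee,\forall,\exists$; negation of an arbitrary formula is defined by De Morgan dualities with $\neg\neg\varphi:=\varphi$. A standard Gödel numbering is fixed; $\#e$ is the code of $e$, $\ulcorner e\urcorner$ the numeral of $\#e$, $\mathrm{val}(t)$ the value of a closed term $t$, $\dot\neg$ the primitive recursive function with $\dot\neg(\#\varphi)=\#\neg\varphi$; $\mathrm T\varphi,\mathrm P\varphi$ abbreviate $\mathrm T\ulcorner\varphi\urcorner,\mathrm P\ulcorner\varphi\urcorner$. Semantics. A partial model is $(\mathbb N,T,P)$ with $\mathbb N$ the standard model and $T=(T^+,T^-)$, $P=(P^+,P^-)$ pairs of subsets of $\omega$. Strong Kleene satisfaction $\models_{SK}$: arithmetic literals evaluated in $\mathbb N$; $\mathrm Tt$ satisfied iff $\mathrm{val}(t)\in T^+$, $\neg\mathrm Tt$ iff $\mathrm{val}(t)\in T^-$, likewise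 for $\mathrm P$ with $P^\pm$; conjunction iff both, disjunction iff at least one, $\forall x\varphi(x)$ iff all numeral instances, $\exists x\varphi(x)$ iff some numeral instance. Base paradoxicality. $\mathrm{PA}[\mathrm{SK}]$ is the two-sided sequent calculus for Strong Kleene logic with identity in $\mathcal L$ (initial sequents $\varphi\Rightarrow\varphi$, cut, weakening, the rule from $\Gamma\Rightarrow\Delta,\varphi$ infer $\neg\varphi,\Gamma\Rightarrow\Delta$, usual rules for $\wedge,\vee,\forall,\exists$, reflexivity $\Rightarrow t=t$, replacement from $\Gamma\Rightarrow\Delta,\varphi(t)$ infer $\Gamma\Rightarrow\Delta,s\neq t,\varphi(s)$) plus the initial sequents of Peano arithmetic and the induction rule for all $\mathcal L$-formulas. A sentence $\varphi$ is base paradoxical iff $\mathrm{PA}[\mathrm{SK}]$ derives $\varphi\Leftrightarrow\neg\mathrm T\varphi$ and $\neg\varphi\Leftrightarrow\mathrm T\varphi$. $B(x)$ is an $\mathcal L_{\mathbb N}$-formula defining in $\mathbb N$ the set of codes of base paradoxical sentences, and $\Pi(x):=B(x)\vee B(\dot\neg x)$. Jump. Let $\mathscr P(x)$ be the $\mathcal L$-formula which is the disjunction of: (1) $x$ codes a sentence and $\Pi(x)$; (2) $x$ codes a sentence $\mathrm Tt$ ($t$ a closed term) and $\mathrm P(\mathrm{val}(t))$; (3) $x$ codes a sentence $\neg\mathrm Tt$ and $\mathrm P(\mathrm{val}(t))$; (4) $x$ codes a sentence $\psi\wedge\theta$ and $(\mathrm P\psi\wedge\mathrm P\theta)\vee(\mathrm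 T\psi\wedge\mathrm P\theta)\vee(\mathrm T\theta\wedge\mathrm P\psi)$; (5) $x$ codes a sentence $\psi\vee\theta$ and $(\mathrm P\psi\wedge\mathrm P\theta)\vee(\neg\mathrm T\psi\wedge\mathrm P\theta)\vee(\neg\mathrm T\theta\wedge\mathrm P\psi)$; (6) $x$ codes a sentence $\forall v\psi$ and $\exists y\,\mathrm P\psi(\dot y)\wedge\forall y(\mathrm P\psi(\dot y)\vee\mathrm T\psi(\dot y))$; (7) $x$ codes a sentence $\exists v\psi$ and $\exists y\,\mathrm P\psi(\dot y)\wedge\forall y(\mathrm P\psi(\dot y)\vee\neg\mathrm T\psi(\dot y))$; here $\psi(\dot y)$ is the code of the result of substituting the numeral of $y$ for $v$. Write $\mathscr P(\varphi)$ for $\mathscr P(\ulcorner\varphi\urcorner)$. Define $\Gamma_{\mathscr{TP}}(T,P)=\big((\{\#\varphi:(\mathbb N,T,P)\models_{SK}\varphi\},\{\#\varphi:(\mathbb N,T,P)\models_{SK}\neg\varphi\}),(\{\#\varphi:(\mathbb N,T,P)\models_{SK}\mathscr P(\varphi)\},\{\#\varphi:(\mathbb N,T,P)\models_{SK}\varphi\vee\neg\varphi\})\big)$, $\varphi$ ranging over $\mathcal L$-sentences. Order: $(X,Y)\le(X',Y')$ iff $X\subseteq X'$ and $Y\subseteq Y'$; $(T,P)\le(T',P')$ iff $T\le T'$ and $P\le P'$. *)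

From Stdlib Require Import Arith List.
Import ListNotations.

Inductive term : Type :=
| tvar : nat -> term
| tzero : term
| tsucc : term -> term
| tplus : term -> term -> term
| ttimes : term -> term -> term.

(* Tait-style formulas: literals, /\, \/, forall, exists (binding var 0). *)
Inductive form : Type :=
| feq : term -> term -> form
| fneq : term -> term -> form
| fT : term -> form
| fnT : term -> form
| fP : term -> form
| fnP : term -> form
| fand : form -> form -> form
| for_ : form -> form -> form
| fall : form -> form
| fex : form -> form.

Fixpoint neg (f : form) : form :=
  match f with
  | feq s t => fneq s t
  | fneq s t => feq s t
  | fT t => fnT t
  | fnT t => fT t
  | fP t => fnP t
  | fnP t => fP t
  | fand a b => for_ (neg a) (neg b)
  | for_ a b => fand (neg a) (neg b)
  | fall a => fex (neg a)
  | fex a => fall (neg a)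
  end.

Fixpoint closed_t (k : nat) (t : term) : Prop :=
  match t with
  | tvar n => n < k
  | tzero => True
  | tsucc a => closed_t k a
  | tplus a b | ttimes a b => closed_t k a /\ closed_t k b
  end.

Fixpoint closed_f (k : nat) (f : form) : Prop :=
  match f with
  | feq s t | fneq s t => closed_t k s /\ closed_t k t
  | fT t | fnT t | fP t | fnP t => closed_t k t
  | fand a b | for_ a b => closed_f k a /\ closed_f k b
  | fall a | fex a => closed_f (S k) a
  end.

Definition sentence (f : form) : Prop := closed_f 0 f.
Definition closed_term (t : term) : Prop := closed_t 0 t.

Definition scons {A} (x : A) (s : nat -> A) (n : nat) : A :=
  match n with 0 => x | S m => s m end.

Fixpoint ren_t (r : nat -> nat) (t : term) : term :=
  match t with
  | tvar n => tvar (r n)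
  | tzero => tzero
  | tsucc a => tsucc (ren_t r a)
  | tplus a b => tplus (ren_t r a) (ren_t r b)
  | ttimes a b => ttimes (ren_t r a) (ren_t r b)
  end.

Fixpoint subst_t (s : nat -> term) (t : term) : term :=
  match t with
  | tvar n => s n
  | tzero => tzero
  | tsucc a => tsucc (subst_t s a)
  | tplus a b => tplus (subst_t s a) (subst_t s b)
  | ttimes a b => ttimes (subst_t s a) (subst_t s b)
  end.

Definition up (s : nat -> term) : nat -> term :=
  scons (tvar 0) (fun n => ren_t S (s n)).

Fixpoint subst_f (s : nat -> term) (f : form) : form :=
  match f with
  | feq a b => feq (subst_t s a) (subst_t s b)
  | fneq a b => fneq (subst_t s a) (subst_t s b)
  | fT t => fT (subst_t s t)
  | fnT t => fnT (subst_t s t)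
  | fP t => fP (subst_t s t)
  | fnP t => fnP (subst_t s t)
  | fand a b => fand (subst_f s a) (subst_f s b)
  | for_ a b => for_ (subst_f s a) (subst_f s b)
  | fall a => fall (subst_f (up s) a)
  | fex a => fex (subst_f (up s) a)
  end.

Definition lift (f : form) : form := subst_f (fun n => tvar (S n)) f.
Definition inst (t : term) (f : form) : form := subst_f (scons t tvar) f.

Fixpoint num (n : nat) : term :=
  match n with 0 => tzero | S m => tsucc (num m) end.

Definition pair (a b : nat) : nat := (a + b) * (a + b + 1) / 2 + b.

Fixpoint code_t (t : term) : nat :=
  match t with
  | tvar n => pair 0 n
  | tzero => pair 1 0
  | tsucc a => pair 2 (code_t a)
  | tplus a b => pair 3 (pair (code_t a) (code_t b))
  | ttimes a b => pair 4 (pair (code_t a) (code_t b))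
  end.

Fixpoint code (f : form) : nat :=
  match f with
  | feq a b => pair 0 (pair (code_t a) (code_t b))
  | fneq a b => pair 1 (pair (code_t a) (code_t b))
  | fT t => pair 2 (code_t t)
  | fnT t => pair 3 (code_t t)
  | fP t => pair 4 (code_t t)
  | fnP t => pair 5 (code_t t)
  | fand a b => pair 6 (pair (code a) (code b))
  | for_ a b => pair 7 (pair (code a) (code b))
  | fall a => pair 8 (code a)
  | fex a => pair 9 (code a)
  end.

Definition quote (f : form) : term := num (code f).

Definition nset := nat -> Prop.
Definition ppair := (nset * nset)%type.   (* (X^+, X^-) *)

Fixpoint eval (rho : nat -> nat) (t : term) : nat :=
  match t with
  | tvar n => rho n
  | tzero => 0
  | tsucc a => S (eval rho a)
  | tplus a b => eval rho a + eval rho b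
  | ttimes a b => eval rho a * eval rho b
  end.

Definition val (t : term) : nat := eval (fun _ => 0) t.

Fixpoint sat (T P : ppair) (rho : nat -> nat) (f : form) : Prop :=
  match f with
  | feq a b => eval rho a = eval rho b
  | fneq a b => eval rho a <> eval rho b
  | fT t => fst T (eval rho t)
  | fnT t => snd T (eval rho t)
  | fP t => fst P (eval rho t)
  | fnP t => snd P (eval rho t)
  | fand a b => sat T P rho a /\ sat T P rho b
  | for_ a b => sat T P rho a \/ sat T P rho b
  | fall a => forall n, sat T P (scons n rho) a
  | fex a => exists n, sat T P (scons n rho) a
  end.

(* (N,T,P) |=_SK f, for sentences f *)
Definition satSK (T P : ppair) (f : form) : Prop := sat T P (fun _ => 0) f.

Inductive deriv : list form -> list form -> Prop :=
| d_init : forall f, deriv [f] [f]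
| d_cut : forall G D f, deriv G (f :: D) -> deriv (f :: G) D -> deriv G D
| d_weak : forall G D G' D', deriv G D -> incl G G' -> incl D D' -> deriv G' D'
| d_negL : forall G D f, deriv G (f :: D) -> deriv (neg f :: G) D
| d_andL : forall G D a b, deriv (a :: b :: G) D -> deriv (fand a b :: G) D
| d_andR : forall G D a b, deriv G (a :: D) -> deriv G (b :: D) -> deriv G (fand a b :: D)
| d_orL : forall G D a b, deriv (a :: G) D -> deriv (b :: G) D -> deriv (for_ a b :: G) D
| d_orR : forall G D a b, deriv G (a :: b :: D) -> deriv G (for_ a b :: D)
| d_allL : forall G D a t, deriv (inst t a :: G) D -> deriv (fall a :: G) D
| d_allR : forall G D a, deriv (map lift G) (a :: map lift D) -> deriv G (fall a :: D)
| d_exL : forall G D a, deriv (a :: map lift G) (map lift D) -> deriv (fex a :: G) D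
| d_exR : forall G D a t, deriv G (inst t a :: D) -> deriv G (fex a :: D)
| d_refl : forall t, deriv [] [feq t t]
| d_repl : forall G D a s t,
    deriv G (inst t a :: D) -> deriv G (inst s a :: fneq s t :: D)
| d_pa1 : forall t, deriv [] [fneq (tsucc t) tzero]
| d_pa2 : forall s t, deriv [feq (tsucc s) (tsucc t)] [feq s t]
| d_pa3 : forall t, deriv [] [feq (tplus t tzero) t]
| d_pa4 : forall s t, deriv [] [feq (tplus s (tsucc t)) (tsucc (tplus s t))]
| d_pa5 : forall t, deriv [] [feq (ttimes t tzero) tzero]
| d_pa6 : forall s t, deriv [] [feq (ttimes s (tsucc t)) (tplus (ttimes s t) s)]
(* induction rule, for all L-formulas a (induction variable = var 0) *)
| d_ind : forall G D a t,
    deriv (a :: map lift G)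
          (subst_f (scons (tsucc (tvar 0)) (fun n => tvar (S n))) a :: map lift D) ->
    deriv (inst tzero a :: G) (inst t a :: D).

Definition bideriv (f g : form) : Prop := deriv [f] [g] /\ deriv [g] [f].

Definition base_paradoxical (f : form) : Prop :=
  sentence f /\
  bideriv f (neg (fT (quote f))) /\ bideriv (neg f) (fT (quote f)).

Definition Bset : nset :=
  fun n => exists f, sentence f /\ n = code f /\ base_paradoxical f.

(* Arithmetical subformulas are evaluated in N; T/P atoms by SK. *)
Definition Psat (T P : ppair) (n : nat) : Prop :=
  (exists f, sentence f /\ n = code f /\ (Bset (code f) \/ Bset (code (neg f))))
  \/ (exists t, closed_term t /\ n = code (fT t) /\ fst P (val t))
  \/ (exists t, closed_term t /\ n = code (fnT t) /\ fst P (val t))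
  \/ (exists a b, sentence (fand a b) /\ n = code (fand a b) /\
        ((fst P (code a) /\ fst P (code b)) \/
         (fst T (code a) /\ fst P (code b)) \/
         (fst T (code b) /\ fst P (code a))))
  \/ (exists a b, sentence (for_ a b) /\ n = code (for_ a b) /\
        ((fst P (code a) /\ fst P (code b)) \/
         (snd T (code a) /\ fst P (code b)) \/
         (snd T (code b) /\ fst P (code a))))
  \/ (exists a, sentence (fall a) /\ n = code (fall a) /\
        (exists y, fst P (code (inst (num y) a))) /\
        (forall y, fst P (code (inst (num y) a)) \/ fst T (code (inst (num y) a))))
  \/ (exists a, sentence (fex a) /\ n = code (fex a) /\
        (exists y, fst P (code (inst (num y) a))) /\
        (forall y, fst P (code (inst (num y) a)) \/ snd T (code (inst (num y) a)))).

Definition codes_of (Q : form -> Prop) : nset :=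
  fun n => exists f, sentence f /\ n = code f /\ Q f.

Definition Gamma_TP (T P : ppair) : ppair * ppair :=
  ( (codes_of (fun f => satSK T P f), codes_of (fun f => satSK T P (neg f))),
    (codes_of (fun f => Psat T P (code f)),
     codes_of (fun f => satSK T P (for_ f (neg f)))) ).

Definition le_pair (X Y : ppair) : Prop :=
  (forall n, fst X n -> fst Y n) /\ (forall n, snd X n -> snd Y n).

Definition le_TP (A B : ppair * ppair) : Prop :=
  le_pair (fst A) (fst B) /\ le_pair (snd A) (snd B).


(* Strong Kleene satisfaction only ever asks for membership in T+, T-, P+ or P-:
   a negated atom reads the anti-extension rather than the complement of the
   extension.  The formula P(x) has the same shape (its clause (1) does not
   mention T or P at all), so all four components of the jump grow with (T, P). *)

Section Monotonicity.

Variables T P T' P' : ppair.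
Hypothesis leT : le_pair T T'.
Hypothesis leP : le_pair P P'.

Lemma sat_mono (f : form) (rho : nat -> nat) :
  sat T P rho f -> sat T' P' rho f.
Proof.
  destruct leT as [leT1 leT2], leP as [leP1 leP2].
  revert rho; induction f; intros rho Hf; simpl in *; auto.
  - destruct Hf; split; auto.
  - destruct Hf; [left | right]; auto.
  - destruct Hf as [n Hn]; exists n; auto.
Qed.

Lemma satSK_mono (f : form) : satSK T P f -> satSK T' P' f.
Proof. apply sat_mono. Qed.

Lemma Psat_mono (n : nat) : Psat T P n -> Psat T' P' n.
Proof.
  destruct leT as [leT1 leT2], leP as [leP1 leP2].
  unfold Psat; intros [H1 | [H2 | [H3 | [H4 | [H5 | [H6 | H7]]]]]].
  - left; exact H1.
  - right; left; destruct H2 as (t & Ht & Hn & HPt); eauto.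
  - do 2 right; left; destruct H3 as (t & Ht & Hn & HPt); eauto.
  - do 3 right; left; destruct H4 as (a & b & Hs & Hn & Hab).
    exists a, b; do 2 (split; [assumption |]).
    destruct Hab as [[] | [[] | []]]; auto.
  - do 4 right; left; destruct H5 as (a & b & Hs & Hn & Hab).
    exists a, b; do 2 (split; [assumption |]).
    destruct Hab as [[] | [[] | []]]; auto.
  - do 5 right; left; destruct H6 as (a & Hs & Hn & [y Hy] & Hall).
    exists a; do 2 (split; [assumption |]); split; [eauto |].
    intro z; destruct (Hall z); auto.
  - do 6 right; destruct H7 as (a & Hs & Hn & [y Hy] & Hall).
    exists a; do 2 (split; [assumption |]); split; [eauto |].
    intro z; destruct (Hall z); auto.
Qed.

End Monotonicity.

Lemma codes_of_mono (Q Q' : form -> Prop) (n : nat) :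
  (forall f, Q f -> Q' f) -> codes_of Q n -> codes_of Q' n.
Proof. intros HQ [f (Hs & Hn & Hf)]; exists f; auto. Qed.

Theorem mainTheorem3 (T P T' P' : ppair) :
  le_TP (T, P) (T', P') -> le_TP (Gamma_TP T P) (Gamma_TP T' P').
Proof.
  intros [leT leP]; simpl in leT, leP.
  repeat split; intro n; apply codes_of_mono; intro f.
  - apply satSK_mono; assumption.
  - apply satSK_mono; assumption.
  - apply Psat_mono; assumption.
  - apply satSK_mono; assumption.
Qed.
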